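(* Let $R,S$ be finite nonempty sets, $k$ a positive integer, $p_r>0$ ($r\in R$), $T=\sum_{r\in R}p_r$, $d_{r,s}\ge0$, and $\kappa<0$. Let $F$ be the set of $(\mathbf x,\mathbf y)$ with $x_s,y_{r,s}\in\{0,1\}$, $\sum_{s\in S}x_s=k$, $y_{r,s}\le x_s$, and $\sum_{s\in S}y_{r,s}=1$ for all $r$. For $\mathbf y$ let $\overline{\mathcal K}(\mathbf y)=\sum_{r,s}p_ry_{r,s}e^{-\kappa d_{r,s}}$ and $\mathcal K(\mathbf y)=-\frac1\kappa\ln\left(\frac1T\overline{\mathcal K}(\mathbf y)\right)$. Let $U\subseteq S$, and suppose $c_s=c$ for all $s\in U$ with $c\ge 0$; let $\sigma(\mathbf x)=\sum_{s\in U}c_sx_s$. Let $\hat{\mathcal K}\in\mathbb R$ and let $(\mathbf x^*,\mathbf y^*,v^*,q^* )$ be optimal for \[ \text{(KPL}^p)\quad \min\ \overline{\mathcal K}(\mathbf y)+Te^{-\kappa\hat{\mathcal K}}(v-1)\ \text{ s.t. } (\mathbf x,\mathbf y)\in F,\ v\ge e^{q},\ q=-\kappa\,\sigma(\mathbf x), \] with $\sigma^*=\sigma(\mathbf x^* )$, $q^*=-\kappa\sigma^*$, $\mathcal K^*=\mathcal K(\mathbf y^* )$. Let $n=\min\{k,|U|\}$ and linearization points $\beta_i:=-\kappa c\, i$ for $i=0,1,\dots,n$, and $g(q)=\max_{0\le i\le n}\left(e^{\beta_i}+e^{\beta_i}(q-\beta_i)\right)$ (the tangent-line lower approximation of $e^q$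 used in the linearized model (KPL$^t$), in which $v\ge e^q$ is replaced by $v\ge e^{\beta_i}+e^{\beta_i}(q-\beta_i)$ for all $i$). Define $\hat\sigma$ and $\ddot\sigma$ by \[ \mathcal K^*+\hat\sigma=-\tfrac1\kappa\ln\left(\tfrac1T\left(\overline{\mathcal K}(\mathbf y^* )+Te^{-\kappa\hat{\mathcal K}}\left(e^{q^*}-1\right)\right)\right),\quad \mathcal K^*+\ddot\sigma=-\tfrac1\kappa\ln\left(\tfrac1T\left(\overline{\mathcal K}(\mathbf y^* )+Te^{-\kappa\hat{\mathcal K}}\left(g(q^* )-1\right)\right)\right). \] Then $\ddot\sigma=\hat\sigma$.
   Context: $\hat\sigma$ is the penalty applied to the optimal Kolm–Pollak score by the model with the exact exponential constraint, and $\ddot\sigma$ the penalty applied when the exponential is replaced by its lower-bounding tangent lines at the points $\beta_i$. *)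

From mathcomp Require Import all_boot all_order all_algebra.
From mathcomp Require Import all_classical all_reals all_analysis.
Set Implicit Arguments. Unset Strict Implicit. Unset Printing Implicit Defensive.
Import Order.TTheory GRing.Theory Num.Theory.
Local Open Scope ring_scope.

Section KP.
Variables (R : realType) (Rs Ss : finType).

Definition Ttot (p : Rs -> R) : R := \sum_(r : Rs) p r.

Definition feasF (k : nat) (x : Ss -> R) (y : Rs -> Ss -> R) : Prop :=
  [/\ (forall s, x s = 0 \/ x s = 1),
      (forall r s, y r s = 0 \/ y r s = 1),
      \sum_(s : Ss) x s = k%:R,
      (forall r s, y r s <= x s) &
      (forall r, \sum_(s : Ss) y r s = 1)].

Definition Kbar (p : Rs -> R) (kappa : R) (d : Rs -> Ss -> R)
  (y : Rs -> Ss -> R) : R :=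
  \sum_(r : Rs) \sum_(s : Ss) p r * y r s * expR (- kappa * d r s).

Definition Kscore (p : Rs -> R) (kappa : R) (d : Rs -> Ss -> R)
  (y : Rs -> Ss -> R) : R :=
  - kappa^-1 * ln ((Ttot p)^-1 * Kbar p kappa d y).

Definition sigmaU (U : {set Ss}) (cs : Ss -> R) (x : Ss -> R) : R :=
  \sum_(s in U) cs s * x s.

Definition feasKPLp (k : nat) (U : {set Ss}) (cs : Ss -> R) (kappa : R)
  (x : Ss -> R) (y : Rs -> Ss -> R) (v q : R) : Prop :=
  [/\ feasF k x y, expR q <= v & q = - kappa * sigmaU U cs x].

Definition objKPLp (p : Rs -> R) (kappa : R) (d : Rs -> Ss -> R) (Khat : R)
  (y : Rs -> Ss -> R) (v : R) : R :=
  Kbar p kappa d y + Ttot p * expR (- kappa * Khat) * (v - 1).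

Definition optKPLp (p : Rs -> R) (k : nat) (d : Rs -> Ss -> R) (kappa : R)
  (U : {set Ss}) (cs : Ss -> R) (Khat : R)
  (x : Ss -> R) (y : Rs -> Ss -> R) (v q : R) : Prop :=
  feasKPLp k U cs kappa x y v q /\
  forall x' y' v' q', feasKPLp k U cs kappa x' y' v' q' ->
    objKPLp p kappa d Khat y v <= objKPLp p kappa d Khat y' v'.

Definition beta (kappa c : R) (i : nat) : R := - kappa * c * i%:R.

(* g(q) = max_{0<=i<=n} (e^{beta_i} + e^{beta_i}(q - beta_i));
   the seed 1 + q is the i = 0 tangent line, which is itself in the max. *)
Definition gtan (kappa c : R) (n : nat) (q : R) : R :=
  \big[Num.max/(1 + q)]_(i < n.+1)
     (expR (beta kappa c i) + expR (beta kappa c i) * (q - beta kappa c i)).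

Definition sigma_hat (p : Rs -> R) (kappa : R) (d : Rs -> Ss -> R) (Khat : R)
  (y : Rs -> Ss -> R) (q : R) : R :=
  - kappa^-1 * ln ((Ttot p)^-1 *
      (Kbar p kappa d y + Ttot p * expR (- kappa * Khat) * (expR q - 1)))
  - Kscore p kappa d y.

Definition sigma_ddot (p : Rs -> R) (kappa : R) (d : Rs -> Ss -> R) (Khat : R)
  (c : R) (n : nat) (y : Rs -> Ss -> R) (q : R) : R :=
  - kappa^-1 * ln ((Ttot p)^-1 *
      (Kbar p kappa d y + Ttot p * expR (- kappa * Khat) * (gtan kappa c n q - 1)))
  - Kscore p kappa d y.

End KP.

From mathcomp Require Import all_boot all_order all_algebra.
From mathcomp Require Import all_classical all_reals all_analysis.
Import Order.TTheory GRing.Theory Num.Theory.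
Local Open Scope ring_scope.

(* Tangent lines of [expR] lie below it, so [gtan <= expR], with equality at
   every linearization point [beta i], [i <= n].  Feasibility alone forces [q = beta i] with [i] the number of open sites in [U],
   and [i <= minn k #|U|]: so both penalties evaluate the same quantity. *)

Set Implicit Arguments.
Unset Strict Implicit.

Section Tangents.
Variable R : realType.

Lemma expR_ge_tangent (a q : R) : expR a + expR a * (q - a) <= expR q.
Proof.
have -> : expR q = expR a * expR (q - a) by rewrite -expRD addrC subrK.
rewrite -{1}(mulr1 (expR a)) -mulrDr ler_wpM2l ?expR_ge0 //.
exact: expR_ge1Dx.
Qed.

Lemma gtan_le_expR (kappa c : R) (n : nat) (q : R) : gtan kappa c n q <= expR q.
Proof.
apply: bigmax_le => [|i _]; last exact: expR_ge_tangent.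
by have := expR_ge_tangent 0 q; rewrite expR0 mul1r subr0.
Qed.

Lemma gtan_beta (kappa c : R) (n m : nat) :
  (m <= n)%N -> gtan kappa c n (beta kappa c m) = expR (beta kappa c m).
Proof.
move=> le_mn; apply/le_anti; rewrite gtan_le_expR /=.
have lt_mn1 : (m < n.+1)%N by [].
apply: le_trans (le_bigmax_cond _ _ (j := Ordinal lt_mn1) isT) => /=.
by rewrite subrr mulr0 addr0.
Qed.

End Tangents.

Section BinaryVectors.
Variables (R : realType) (T : finType) (x : T -> R).
Hypothesis x01 : forall s, x s = 0 \/ x s = 1.

Lemma sum_binary (A : {pred T}) :
  \sum_(s in A) x s = #|[pred s in A | x s == 1]|%:R.
Proof.
rewrite (bigID (fun s => x s == 1)) /= [X in _ + X]big1 ?addr0; last first.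
  by move=> s /andP[_]; case: (x01 s) => ->; rewrite ?eqxx.
rewrite (eq_bigr (fun=> 1)) => [|s /andP[_ /eqP //]].
by rewrite sumr_const; congr (_ *+ _); apply: eq_card.
Qed.

Lemma sigmaU_binary (U : {set T}) (cs : T -> R) (c : R) :
  (forall s, s \in U -> cs s = c) ->
  sigmaU U cs x = c * #|[pred s in U | x s == 1]|%:R.
Proof.
move=> csc; rewrite /sigmaU -sum_binary mulr_sumr.
by apply: eq_bigr => s /csc ->.
Qed.

Lemma card_binary_le_minn (U : {set T}) (k : nat) :
  \sum_s x s = k%:R -> (#|[pred s in U | x s == 1%R]| <= minn k #|U|)%N.
Proof.
move=> sumx; rewrite leq_min; apply/andP; split.
  have : \sum_(s in T) x s = k%:R by rewrite -sumx; apply: eq_bigl.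
  rewrite sum_binary => /eqP; rewrite eqr_nat => /eqP <-.
  by apply/subset_leq_card/fintype.subsetP => s /andP[].
by apply/subset_leq_card/fintype.subsetP => s /andP[].
Qed.

End BinaryVectors.

Unset Implicit Arguments.
Set Strict Implicit.

Theorem proposition3 (R : realType) (Rs Ss : finType) (k : nat)
  (p : Rs -> R) (d : Rs -> Ss -> R) (kappa : R)
  (U : {set Ss}) (cs : Ss -> R) (c : R) (Khat : R)
  (xs : Ss -> R) (ys : Rs -> Ss -> R) (vs qs : R) :
  (0 < #|Rs|)%N -> (0 < #|Ss|)%N -> (0 < k)%N ->
  (forall r, 0 < p r) ->
  (forall r s, 0 <= d r s) ->
  kappa < 0 ->
  (forall s, s \in U -> cs s = c) -> 0 <= c ->
  optKPLp p k d kappa U cs Khat xs ys vs qs ->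
  sigma_ddot p kappa d Khat c (minn k #|U|) ys qs = sigma_hat p kappa d Khat ys qs.
Proof.
move=> _ _ _ _ _ _ csc _ [[[x01 _ sumx _ _] _ ->] _].
have qE : - kappa * sigmaU U cs xs = beta kappa c #|[pred s in U | xs s == 1]|.
  by rewrite (sigmaU_binary x01 csc) /beta mulrA.
rewrite qE /sigma_ddot /sigma_hat gtan_beta //.
exact: card_binary_le_minn.
Qed.
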